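(* Let $J\ge5$ be an integer and let $n$ be an integer with $n\not\equiv0\pmod{2^{J-1}}$. Then $n=a+b$ for some integers $a,b$ with $a\equiv2^i\pmod{2^{i+2}}$ and $b\equiv2^j\pmod{2^{j+2}}$ for some integers $0\le i,j\le J-3$. *)

From Stdlib Require Import ZArith.
Open Scope Z_scope.

(** Write [n = 2^v (2m+1)]; the hypothesis forces [v <= J - 2].  If [v >= 1]
    then [n = 2^(v-1) (4m+1) + 2^(v-1)], both summands of class [v - 1].  If
    [v = 0] then [n] is odd and one of [n - 2], [n - 4] is [1 mod 4]; the other
    summand [2 = 2^1] or [4 = 2^2] has class at most [2 <= J - 3]. *)

From Stdlib Require Import ZArith Lia.
Open Scope Z_scope.

Definition pow2_class (i a : Z) : Prop := exists k, a = 2 ^ i * (4 * k + 1).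

Lemma pow2_class_mod (i a : Z) :
  0 <= i -> pow2_class i a -> a mod 2 ^ (i + 2) = 2 ^ i mod 2 ^ (i + 2).
Proof.
  intros Hi [k ->].
  rewrite Z.pow_add_r by lia.
  replace (2 ^ i * (4 * k + 1)) with (2 ^ i + k * (2 ^ i * 2 ^ 2)) by ring.
  apply Z.mod_add.
  pose proof (Z.pow_pos_nonneg 2 i). simpl. lia.
Qed.

Lemma pow2_mul_odd_decomp (t n : Z) :
  0 <= t -> ~ (2 ^ (t + 1) | n) ->
  exists v m, 0 <= v <= t /\ n = 2 ^ v * (2 * m + 1).
Proof.
  intros Ht; revert n; pattern t; apply natlike_ind; [| | exact Ht]; clear t Ht.
  - intros n Hn. exists 0, (n / 2).
    pose proof (Z.div_mod n 2 ltac:(lia)).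
    pose proof (Z.mod_pos_bound n 2 ltac:(lia)).
    assert (n mod 2 <> 0) by (rewrite Z.mod_divide by lia; exact Hn).
    rewrite Z.pow_0_r. lia.
  - intros t Ht IH n Hn.
    destruct (Z.even n) eqn:En.
    + apply Z.even_spec in En as [n' ->].
      assert (Hn' : ~ (2 ^ (t + 1) | n')).
      { intros D. apply Hn.
        replace (Z.succ t + 1) with (1 + (t + 1)) by lia.
        rewrite Z.pow_add_r, Z.pow_1_r by lia.
        now apply Z.mul_divide_mono_l. }
      destruct (IH n' Hn') as [v [m [Hv ->]]].
      exists (v + 1), m. split; [lia |].
      rewrite Z.pow_add_r by lia. ring.
    + assert (On : Z.odd n = true) by now rewrite <- Z.negb_even, En.
      apply Z.odd_spec in On as [m ->].
      exists 0, m. rewrite Z.pow_0_r. split; [lia | ring].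
Qed.

Lemma pow2_class_sum_even (v m : Z) :
  1 <= v ->
  exists a b, 2 ^ v * (2 * m + 1) = a + b /\
    pow2_class (v - 1) a /\ pow2_class (v - 1) b.
Proof.
  intros Hv. exists (2 ^ (v - 1) * (4 * m + 1)), (2 ^ (v - 1)).
  split; [| split; [exists m | exists 0]; ring].
  replace v with ((v - 1) + 1) at 1 by lia.
  rewrite Z.pow_add_r by lia. ring.
Qed.

Lemma pow2_class_sum_odd (m : Z) :
  exists a b j, 2 * m + 1 = a + b /\ 1 <= j <= 2 /\
    pow2_class 0 a /\ pow2_class j b.
Proof.
  destruct (Z.even m) eqn:Em.
  - apply Z.even_spec in Em as [k ->].
    exists (4 * (k - 1) + 1), 4, 2.
    split; [lia | split; [lia | split; [exists (k - 1) | exists 0]]]; ring.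
  - assert (Om : Z.odd m = true) by now rewrite <- Z.negb_even, Em.
    apply Z.odd_spec in Om as [k ->].
    exists (4 * k + 1), 2, 1.
    split; [lia | split; [lia | split; [exists k | exists 0]]]; ring.
Qed.

Theorem lemma1 (J n : Z) (hJ : 5 <= J)
  (hn : n mod (2 ^ (J - 1)) <> 0) :
  exists a b i j : Z,
    n = a + b /\
    0 <= i <= J - 3 /\ 0 <= j <= J - 3 /\
    a mod (2 ^ (i + 2)) = 2 ^ i mod (2 ^ (i + 2)) /\
    b mod (2 ^ (j + 2)) = 2 ^ j mod (2 ^ (j + 2)).
Proof.
  assert (Hndiv : ~ (2 ^ (J - 2 + 1) | n)).
  { replace (J - 2 + 1) with (J - 1) by lia.
    rewrite <- Z.mod_divide; [exact hn |].
    pose proof (Z.pow_pos_nonneg 2 (J - 1)). lia. }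
  destruct (pow2_mul_odd_decomp (J - 2) n ltac:(lia) Hndiv) as [v [m [Hv ->]]].
  destruct (Z.eq_dec v 0) as [-> | Hv0].
  - destruct (pow2_class_sum_odd m) as [a [b [j [Hab [Hj [Ha Hb]]]]]].
    exists a, b, 0, j. rewrite Z.pow_0_r, Z.mul_1_l.
    repeat split; try lia; apply pow2_class_mod; auto; lia.
  - destruct (pow2_class_sum_even v m ltac:(lia)) as [a [b [Hab [Ha Hb]]]].
    exists a, b, (v - 1), (v - 1).
    repeat split; try lia; apply pow2_class_mod; auto; lia.
Qed.
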